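(* Let $f:E\to X$ be a fibrewise pointed map over $B$. Then $\mathrm{secat}^B_B(f)\le\mathrm{cat}^B_B(X)$. If moreover $E$ is fibrewise pointed contractible, then $\mathrm{secat}^B_B(f)=\mathrm{cat}^B_B(X)$.
   Context: Fibrewise pointed space over $B$: a space $X$ with a map $p_X:X\to B$ and a section $s_X$; fibrewise pointed map: $p_Yf=p_X$, $fs_X=s_Y$. A fibrewise pointed homotopy is a homotopy $H$ with $p_Y(H(x,t))=p_X(x)$ and $H(s_X(b),t)=s_Y(b)$ for all $b,t$ ($\simeq^B_B$). $E$ is fibrewise pointed contractible if it is fibrewise pointed homotopy equivalent to $B$ (with projection and section $\mathrm{id}_B$). $\mathrm{secat}^B_B(f)$: least $n$ such that $X$ is covered by $n+1$ open sets $U\supseteq s_X(B)$ each with a fibrewise pointed map $s:U\to E$ with $fs\simeq^B_B$ the inclusion $U\hookrightarrow X$. $\mathrm{cat}^B_B(X)$: least $n$ such that $X$ is covered by $n+1$ open sets $U_i\supseteq s_X(B)$ with inclusion $U_i\hookrightarrow X$ fibrewise pointed homotopic to $s_X\circ p_X|_{U_i}$. Both $\infty$ if no such $n$. *)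

From HB Require Import structures.
From mathcomp Require Import all_boot all_order all_algebra.
From mathcomp Require Import all_classical all_reals topology normedtype.
Import numFieldNormedType.Exports.
Set Implicit Arguments. Unset Strict Implicit. Unset Printing Implicit Defensive.
Import Order.TTheory GRing.Theory Num.Theory.
Local Open Scope classical_set_scope.
Local Open Scope ring_scope.

Record fpspace (B : topologicalType) := FPSpace {
  fp_carrier :> topologicalType;
  fp_proj : fp_carrier -> B;
  fp_sec : B -> fp_carrier;
  fp_proj_cont : continuous fp_proj;
  fp_sec_cont : continuous fp_sec;
  fp_proj_sec : forall b, fp_proj (fp_sec b) = b }.
Arguments fp_proj {B} f _.
Arguments fp_sec {B} f _.

Definition fp_base (B : topologicalType) : fpspace B :=
  @FPSpace B B id id (fun x => @cvg_id B (nbhs x)) (fun x => @cvg_id B (nbhs x))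
    (fun b => erefl).

(* f : X -> Y is a fibrewise pointed map on the subspace U of X
   (U is assumed to contain s_X(B)); continuity is for the subspace topology. *)
Definition fp_map_on (B : topologicalType) (X Y : fpspace B)
    (U : set X) (f : X -> Y) : Prop :=
  {within U, continuous f} /\
  (forall x, U x -> fp_proj Y (f x) = fp_proj X x) /\
  (forall b, f (fp_sec X b) = fp_sec Y b).

Definition fp_map (B : topologicalType) (X Y : fpspace B) (f : X -> Y) :=
  fp_map_on setT f.

Definition unitI (R : realType) : set R := `[0%R, 1%R]%classic.

Definition fp_homotopic_on (R : realType) (B : topologicalType)
    (X Y : fpspace B) (U : set X) (g0 g1 : X -> Y) : Prop :=
  exists H : (X * R)%type -> Y,
    {within (U `*` (@unitI R)), continuous H} /\
    (forall x, U x -> H (x, 0%R) = g0 x) /\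
    (forall x, U x -> H (x, 1%R) = g1 x) /\
    (forall x t, U x -> (@unitI R) t -> fp_proj Y (H (x, t)) = fp_proj X x) /\
    (forall b t, (@unitI R) t -> H (fp_sec X b, t) = fp_sec Y b).

Definition fp_contractible (R : realType) (B : topologicalType) (E : fpspace B) :=
  exists (a : E -> fp_base B) (b : fp_base B -> E),
    @fp_map B E (fp_base B) a /\ @fp_map B (fp_base B) E b /\
    @fp_homotopic_on R B (fp_base B) (fp_base B) setT (a \o b) id /\
    @fp_homotopic_on R B E E setT (b \o a) id.

Definition secat_le (R : realType) (B : topologicalType) (E X : fpspace B)
    (f : E -> X) (n : nat) : Prop :=
  exists U : 'I_n.+1 -> set X,
    (forall i, open (U i)) /\
    (forall i, range (fp_sec X) `<=` U i) /\
    (forall x, exists i, U i x) /\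
    (forall i, exists s : X -> E,
        fp_map_on (U i) s /\ @fp_homotopic_on R B X X (U i) (f \o s) id).

Definition cat_le (R : realType) (B : topologicalType) (X : fpspace B)
    (n : nat) : Prop :=
  exists U : 'I_n.+1 -> set X,
    (forall i, open (U i)) /\
    (forall i, range (fp_sec X) `<=` U i) /\
    (forall x, exists i, U i x) /\
    (forall i, @fp_homotopic_on R B X X (U i) id (fp_sec X \o fp_proj X)).

(* Least n satisfying P, or None (= infinity) if there is none. *)
Definition least_nat (P : nat -> Prop) : option nat :=
  match pselect (exists n, P n) with
  | left ex => Some (ex_minn (P := fun n => `[< P n >])
                      (let: ex_intro n Pn := ex in ex_intro _ n (asboolT Pn)))
  | right _ => None
  end.

Definition ole (a b : option nat) : bool :=
  match a, b with
  | _, None => true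
  | None, Some _ => false
  | Some m, Some n => (m <= n)%N
  end.

Definition secatBB (R : realType) (B : topologicalType) (E X : fpspace B)
    (f : E -> X) : option nat := least_nat (secat_le R f).

Definition catBB (R : realType) (B : topologicalType) (X : fpspace B) : option nat :=
  least_nat (cat_le R X).

From HB Require Import structures.
From mathcomp Require Import all_boot all_order all_algebra.
From mathcomp Require Import all_classical all_reals topology normedtype.
From mathcomp Require Import lra.
Import numFieldNormedType.Exports.
Set Implicit Arguments. Unset Strict Implicit. Unset Printing Implicit Defensive.
Import Order.TTheory GRing.Theory Num.Theory.
Local Open Scope classical_set_scope.
Local Open Scope ring_scope.

(* Since f is fibrewise pointed, f \o s_E \o p_X = s_X \o p_X; hence on any
   open set U where id ~ s_X \o p_X, the map s_E \o p_X is a homotopy section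
   of f, and every categorical cover of X is a sectional cover for f.
   Conversely, fibrewise pointed contractibility of E gives s_E \o p_E ~ id on
   E, so a homotopy section s of f on U yields
   id ~ f \o s ~ f \o s_E \o p_E \o s = s_X \o p_X on U. *)

Section continuity_within.
Context {T U W : topologicalType}.

Lemma continuous_fst : continuous (@fst T U).
Proof. by move=> [x y]; exact: cvg_fst. Qed.

Lemma continuous_snd : continuous (@snd T U).
Proof. by move=> [x y]; exact: cvg_snd. Qed.

Lemma continuous_within_comp (A : set T) (C : set U) (g : T -> U) (f : U -> W) :
  {within A, continuous g} -> (forall x, A x -> C (g x)) ->
  {within C, continuous f} -> {within A, continuous (f \o g)}.
Proof.
rewrite !subspace_continuousP => cg gAC cf x Ax.
apply: cvg_comp (cf _ (gAC _ Ax)) => P CP.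
apply: filterS2 (withinT A (nbhs_filter x)) (cg x Ax _ CP) => y Ay CPy.
exact: CPy (gAC _ Ay).
Qed.

Lemma continuous_within_pair (A : set T) (a : T -> U) (b : T -> W) :
  {within A, continuous a} -> {within A, continuous b} ->
  {within A, continuous (fun x => (a x, b x))}.
Proof.
rewrite !subspace_continuousP => ca cb x Ax.
by apply: cvg_pair; [exact: ca|exact: cb].
Qed.

(* Unlike [withinU_continuous], the set [A] need not be closed. *)
Lemma continuous_within_glue (A C D : set T) (f : T -> U) :
  closed C -> closed D -> A `<=` C `|` D ->
  {within A `&` C, continuous f} -> {within A `&` D, continuous f} ->
  {within A, continuous f}.
Proof.
move=> cC cD ACD; rewrite !subspace_continuousP => fC fD x Ax P fP.
have piece (K : set T) : closed K -> (forall y, (A `&` K) y ->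
    f @ within (A `&` K) (nbhs y) --> f y) ->
    nbhs x (fun y => (A `&` K) y -> P (f y)).
  move=> cK fK; have [Kx|nKx] := pselect (K x); first exact: fK.
  have : nbhs x (~` K) by apply: open_nbhs_nbhs; split; rewrite ?openC.
  by apply: filterS => y nKy [].
apply: filterS2 (piece _ cC fC) (piece _ cD fD) => y PC PD Ay.
by case: (ACD _ Ay) => [Cy|Dy]; [exact: PC|exact: PD].
Qed.

End continuity_within.

Section fibrewise_homotopy.
Variables (R : realType) (B : topologicalType).

Lemma unitIP (t : R) : unitI t <-> 0 <= t /\ t <= 1.
Proof. by rewrite /unitI /= in_itv /=; split => [/andP|[-> ->]]. Qed.

Lemma continuous_affine_time {T : topologicalType} (c k : R) :
  continuous (fun p : T * R => (p.1, c + k * p.2)).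
Proof.
move=> p; apply: (@cvg_pair _ _ _ _ (nbhs p.1) (nbhs (c + k * p.2))).
  exact: continuous_fst.
apply: cvgD; first exact: cvg_cst.
by apply: cvgM; [exact: cvg_cst|exact: continuous_snd].
Qed.

Implicit Types E X Y Z : fpspace B.

Lemma eq_fp_homotopic_on X Y (U : set X) (g0 g1 h0 h1 : X -> Y) :
  (forall x, U x -> g0 x = h0 x) -> (forall x, U x -> g1 x = h1 x) ->
  fp_homotopic_on R U g0 g1 -> fp_homotopic_on R U h0 h1.
Proof.
move=> e0 e1 [H [Hc [H0 [H1 HpHs]]]]; exists H.
by do !split=> //; move=> x Ux; [rewrite -e0 ?H0|rewrite -e1 ?H1].
Qed.

Lemma fp_homotopic_on_sym X Y (U : set X) (g0 g1 : X -> Y) :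
  fp_homotopic_on R U g0 g1 -> fp_homotopic_on R U g1 g0.
Proof.
move=> [H [Hc [H0 [H1 [Hp Hs]]]]].
have I_rev (t : R) : unitI t -> unitI (1 + -1 * t).
  by move/unitIP=> It; apply/unitIP; lra.
exists (H \o fun p => (p.1, 1 + -1 * p.2)); split; [|split; [|split; [|split]]].
- apply: continuous_within_comp Hc.
    exact/continuous_subspaceT/continuous_affine_time.
  by move=> [x t] [/= Ux /I_rev].
- by move=> x Ux /=; rewrite mulr0 addr0 H1.
- by move=> x Ux /=; rewrite mulr1 addrN H0.
- by move=> x t Ux /I_rev; exact: Hp.
- by move=> b t /I_rev; exact: Hs.
Qed.

Lemma fp_homotopic_on_trans X Y (U : set X) (g0 g1 g2 : X -> Y) :
  fp_homotopic_on R U g0 g1 -> fp_homotopic_on R U g1 g2 ->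
  fp_homotopic_on R U g0 g2.
Proof.
move=> [G [Gc [G0 [G1 [Gp Gs]]]]] [H [Hc [H0 [H1 [Hp Hs]]]]].
pose L p := if p.2 <= 2^-1 then G (p.1, 0 + 2 * p.2) else H (p.1, -1 + 2 * p.2).
have I_lo (t : R) : unitI t -> t <= 2^-1 -> unitI (0 + 2 * t).
  by move/unitIP=> It ht; apply/unitIP; lra.
have I_hi (t : R) : unitI t -> ~~ (t <= 2^-1) -> unitI (-1 + 2 * t).
  by move/unitIP=> It; rewrite -ltNge => ht; apply/unitIP; lra.
exists L; split; [|split; [|split; [|split]]].
- apply: (continuous_within_glue (C := [set p : X * R | p.2 <= 2^-1])
    (D := [set p : X * R | 2^-1 <= p.2])).
  + exact: (proj1 (continuous_closedP _) (@continuous_snd X R) _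
      (@closed_le R 2^-1)).
  + exact: (proj1 (continuous_closedP _) (@continuous_snd X R) _
      (@closed_ge R 2^-1)).
  + by move=> [x t] _ /=; case: (lerP t 2^-1) => ht; [left|right; exact: ltW].
  + apply: (@subspace_eq_continuous _ _ _ (G \o fun p => (p.1, 0 + 2 * p.2))).
      by move=> [x t] /set_mem [_ /= ht]; rewrite /from_subspace /L /= ht.
    apply: continuous_within_comp Gc.
      exact/continuous_subspaceT/continuous_affine_time.
    by move=> [x t] [[/= Ux It] /= ht]; split=> //; exact: I_lo.
  + apply: (@subspace_eq_continuous _ _ _ (H \o fun p => (p.1, -1 + 2 * p.2))).
      move=> [x t] /set_mem [[/= Ux _] /= ht]; rewrite /from_subspace /L /=.
      case: ifPn => // ht'.
      have -> : t = 2^-1 by apply/eqP; rewrite eq_le ht ht'.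
      have [-> ->] : -1 + 2 * 2^-1 = 0 :> R /\ 0 + 2 * 2^-1 = 1 :> R.
        by split; lra.
      by rewrite H0 // G1.
    apply: continuous_within_comp Hc.
      exact/continuous_subspaceT/continuous_affine_time.
    move=> [x t] [[/= Ux /unitIP It] /= ht]; split=> //; apply/unitIP; lra.
- by move=> x Ux; rewrite /L /= ifT ?mulr0 ?addr0 ?G0 //; lra.
- move=> x Ux; rewrite /L /= ifF; last lra.
  by rewrite (_ : -1 + 2 * 1 = 1) ?H1 //; lra.
- move=> x t Ux It; rewrite /L /=.
  by case: ifPn => ht; [exact: Gp (I_lo _ _ _)|exact: Hp (I_hi _ _ _)].
- move=> b t It; rewrite /L /=.
  by case: ifPn => ht; [exact: Gs (I_lo _ _ _)|exact: Hs (I_hi _ _ _)].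
Qed.

Lemma fp_homotopic_on_precomp X Y Z (U : set X) (V : set Y) (s : X -> Y)
    (g0 g1 : Y -> Z) :
  fp_map_on U s -> (forall x, U x -> V (s x)) ->
  fp_homotopic_on R V g0 g1 -> fp_homotopic_on R U (g0 \o s) (g1 \o s).
Proof.
move=> [sc [sp ss]] sUV [H [Hc [H0 [H1 [Hp Hs]]]]].
exists (H \o fun p => (s p.1, p.2)); split; [|split; [|split; [|split]]].
- apply: continuous_within_comp Hc; last by move=> [x t] [/= /sUV].
  apply: continuous_within_pair; last exact/continuous_subspaceT/continuous_snd.
  apply: continuous_within_comp sc.
    exact/continuous_subspaceT/continuous_fst.
  by move=> [x t] [].
- by move=> x /sUV /H0.
- by move=> x /sUV /H1.
- by move=> x t Ux It /=; rewrite Hp ?sp //; exact: sUV.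
- by move=> b t It /=; rewrite ss Hs.
Qed.

Lemma fp_homotopic_on_postcomp X Y Z (U : set X) (f : Y -> Z) (g0 g1 : X -> Y) :
  fp_map f -> fp_homotopic_on R U g0 g1 ->
  fp_homotopic_on R U (f \o g0) (f \o g1).
Proof.
move=> [fc [fp fs]] [H [Hc [H0 [H1 [Hp Hs]]]]].
exists (f \o H); split; [|split; [|split; [|split]]].
- exact: continuous_within_comp Hc _ fc.
- by move=> x Ux /=; rewrite H0.
- by move=> x Ux /=; rewrite H1.
- by move=> x t Ux It /=; rewrite fp // Hp.
- by move=> b t It /=; rewrite Hs.
Qed.

Lemma fp_map_sec_proj X Y (U : set X) : fp_map_on U (fp_sec Y \o fp_proj X).
Proof.
split; last by split=> [x _|b] /=; rewrite fp_proj_sec.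
apply: continuous_subspaceT => x.
by apply: continuous_comp; [exact: fp_proj_cont|exact: fp_sec_cont].
Qed.

Lemma fp_contractible_sec_proj E :
  fp_contractible R E -> fp_homotopic_on R [set: E] id (fp_sec E \o fp_proj E).
Proof.
move=> [a [b [[_ [ap _]] [[_ [_ bs]] [_ K]]]]].
apply: eq_fp_homotopic_on (fp_homotopic_on_sym K) => // e _ /=.
by rewrite bs -(ap e I).
Qed.

Lemma secat_le_of_cat_le E X (f : E -> X) n :
  fp_map f -> cat_le R X n -> secat_le R f n.
Proof.
move=> [_ [_ fs]] [U [oU [secU [covU hom]]]]; exists U; do 3!split=> //.
move=> i; exists (fp_sec E \o fp_proj X); split; first exact: fp_map_sec_proj.
apply: eq_fp_homotopic_on (fp_homotopic_on_sym (hom i)) => // x _ /=.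
by rewrite fs.
Qed.

Lemma cat_le_of_secat_le E X (f : E -> X) n :
  fp_map f -> fp_contractible R E -> secat_le R f n -> cat_le R X n.
Proof.
move=> hf /fp_contractible_sec_proj K [U [oU [secU [covU hom]]]].
exists U; do 3!split=> //; move=> i.
have [s [hs fs_id]] := hom i.
have fs_sec : fp_homotopic_on R (U i) (f \o s) (fp_sec X \o fp_proj X).
  have fK := fp_homotopic_on_postcomp hf
    (fp_homotopic_on_precomp hs (fun _ _ => I) K).
  apply: eq_fp_homotopic_on fK => // x Ux /=.
  by case: hs hf => _ [-> // _] [_ [_ ->]].
exact: fp_homotopic_on_trans (fp_homotopic_on_sym fs_id) fs_sec.
Qed.

End fibrewise_homotopy.

Lemma ole_least_nat (P Q : nat -> Prop) :
  (forall n, Q n -> P n) -> ole (least_nat P) (least_nat Q).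
Proof.
move=> QP; rewrite /least_nat.
case: (pselect (exists n, Q n)) => [[m Qm]|_]; last by case: pselect.
case: pselect => [exP|]; last by case; exists m; exact: QP.
case: ex_minnP => k _ mink; case: ex_minnP => j /asboolP Qj _.
by apply: mink; apply/asboolP; exact: QP.
Qed.

Theorem proposition3p6 (R : realType) (B : topologicalType) (E X : fpspace B)
    (f : E -> X) (hf : fp_map f) :
  ole (secatBB R f) (catBB R X) /\
  (fp_contractible R E -> secatBB R f = catBB R X).
Proof.
split; first by apply: ole_least_nat => n; exact: secat_le_of_cat_le.
move=> hc; rewrite /secatBB /catBB; congr least_nat.
apply: funext => n; apply: propext.
by split; [exact: cat_le_of_secat_le|exact: secat_le_of_cat_le].
Qed.
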